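(* Let $(B_\gamma,\precsim_\gamma)_{\gamma\in\Gamma}$ be a family, indexed by a totally ordered set $\Gamma$, of abelian groups each endowed with a valuational quasi-order. Then the valuational Hahn product $(G,\precsim_{val})$ of this family is again a group with a valuational quasi-order.
   Context: A quasi-order $\precsim$ on an abelian group $A$ is valuational if there is a valuation $v$ on $A$ (a map $v:A\to\Delta\cup\{\infty\}$, $\Delta$ totally ordered, $\infty$ above $\Delta$, with $v(a)=\infty\Leftrightarrow a=0$, $v(a+b)\ge\min(v(a),v(b))$, $v(-a)=v(a)$) such that $a\precsim b\Leftrightarrow v(b)\le v(a)$. The Hahn product $G$ of $(B_\gamma)_{\gamma\in\Gamma}$ is the group of all $g=(g_\gamma)_\gamma\in\prod_\gamma B_\gamma$ whose support $\{\gamma: g_\gamma\neq0\}$ is well-ordered, with $v(g)=\min\operatorname{supp}(g)$ ($v(0)=\infty$). The valuational Hahn product is $(G,\precsim_{val})$ with $g\precsim_{val}h\Leftrightarrow g_\delta\precsim_\delta h_\delta$ where $\delta=\min(v(g),v(h))$ (and $0\precsim_{val}0$). *)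

From HB Require Import structures.
From mathcomp Require Import all_boot all_order all_algebra.
Set Implicit Arguments. Unset Strict Implicit. Unset Printing Implicit Defensive.
Import Order.TTheory GRing.Theory.
Local Open Scope ring_scope.

(* Order on Delta ∪ {∞}, encoded as [option D] with [None] = ∞ (top). *)
Definition vle {d : Order.disp_t} {D : orderType d} (x y : option D) : Prop :=
  match y with
  | None => True
  | Some b => match x with None => False | Some a => (a <= b)%O end
  end.

Definition valuational_on {A : Type} (zero : A) (add : A -> A -> A)
    (opp : A -> A) (S : A -> Prop) (R : A -> A -> Prop) : Prop :=
  exists (d : Order.disp_t) (D : orderType d) (v : A -> option D),
    (forall a, S a -> (v a = None <-> a = zero)) /\
    (forall a b, S a -> S b -> vle (v a) (v (add a b)) \/ vle (v b) (v (add a b))) /\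
    (forall a, S a -> v (opp a) = v a) /\
    (forall a b, S a -> S b -> (R a b <-> vle (v b) (v a))).

Definition valuational {A : zmodType} (R : A -> A -> Prop) : Prop :=
  valuational_on (0 : A) +%R -%R (fun _ => True) R.

Definition subgroup_closed {A : Type} (zero : A) (add : A -> A -> A)
    (opp : A -> A) (S : A -> Prop) : Prop :=
  S zero /\ (forall a b, S a -> S b -> S (add a b)) /\ (forall a, S a -> S (opp a)).

Section Hahn.
Context {dG : Order.disp_t} {Gam : orderType dG} (B : Gam -> zmodType).

Definition hprod := forall g : Gam, B g.
Definition hzero : hprod := fun g => 0.
Definition hadd (x y : hprod) : hprod := fun g => x g + y g.
Definition hopp (x : hprod) : hprod := fun g => - x g.

Definition is_min (P : Gam -> Prop) (m : Gam) : Prop :=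
  P m /\ forall x, P x -> (m <= x)%O.

Definition well_ordered (P : Gam -> Prop) : Prop :=
  forall Q : Gam -> Prop, (forall x, Q x -> P x) -> (exists x, Q x) ->
    exists m, is_min Q m.

Definition support (x : hprod) : Gam -> Prop := fun g => x g <> 0.

Definition hahn_set (x : hprod) : Prop := well_ordered (support x).

Definition hahn_le (R : forall g, B g -> B g -> Prop) (x y : hprod) : Prop :=
  (x = hzero /\ y = hzero) \/
  exists delta, is_min (fun g => support x g \/ support y g) delta /\
                R delta (x delta) (y delta).
End Hahn.

From Pilot Require Import Defs.
From HB Require Import structures.
From mathcomp Require Import all_boot all_order all_algebra.
From Stdlib Require Import ClassicalEpsilon FunctionalExtensionality PropExtensionality.
Import Order.TTheory GRing.Theory.

(* Choose valuations v_g : B_g -> Δ_g ∪ {∞} inducing the quasi-orders and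
   value an element x by (m, v_m(x_m)), where m is the least element of its
   support, in the lexicographic sum of the value sets Δ_g.  Well-orderedness
   of supports makes m exist and is preserved by sums.  Comparing x and y at
   δ = min(supp x ∪ supp y): if both are nonzero at δ the values are compared
   by v_δ, and if one of them vanishes at δ its value has a larger first
   component, which matches x_δ ≾_δ y_δ since v_δ(0) = ∞. *)

Notation supp := Defs.support.

Section LexicographicSum.
Local Open Scope order_scope.
Context {dG : Order.disp_t} {Gam : orderType dG} {dD : Gam -> Order.disp_t}
  (D : forall g, orderType (dD g)).

Definition lexsum := {g : Gam & D g}.
HB.instance Definition _ := Choice.on lexsum.

Definition lexsum_le (u v : lexsum) : bool :=
  (tag u < tag v) || ((tag u == tag v) && (tagged u <= tagged_as u v)).

Lemma lexsum_le_refl : reflexive lexsum_le.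
Proof. by case=> g a; rewrite /lexsum_le /= eqxx tagged_asE lexx orbT. Qed.

Lemma lexsum_le_anti : antisymmetric lexsum_le.
Proof.
case=> g a [h b]; rewrite /lexsum_le /=; case: (ltgtP g h) => //= eq_gh.
by subst h; rewrite !tagged_asE => /andP[ab ba]; rewrite (@le_anti _ _ a b) ?ab ?ba.
Qed.

Lemma lexsum_le_trans : transitive lexsum_le.
Proof.
case=> g a [h b] [k c]; rewrite /lexsum_le /=.
case/orP=> [lt_gh|/andP[/eqP eq_gh]].
  by case/orP=> [/(lt_trans lt_gh)->|/andP[/eqP eq_hk _]] //; subst k; rewrite lt_gh.
subst h; rewrite tagged_asE => ab /orP[->//|/andP[/eqP eq_gk]].
by subst k; rewrite !tagged_asE eqxx => /(le_trans ab)->; rewrite orbT.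
Qed.

Lemma lexsum_le_total : total lexsum_le.
Proof.
case=> g a [h b]; rewrite /lexsum_le /=.
by case: (ltgtP g h) => //= eq_gh; subst h; rewrite !tagged_asE le_total.
Qed.

HB.instance Definition _ :=
  Order.Le_isPOrder.Build dG lexsum lexsum_le_refl lexsum_le_anti lexsum_le_trans.
HB.instance Definition _ := Order.POrder_isTotal.Build dG lexsum lexsum_le_total.

Lemma lexsum_le_tagged {g} (a b : D g) :
  (Tagged (fun g => D g) a <= Tagged (fun g => D g) b :> lexsum) = (a <= b).
Proof. by rewrite [LHS]/<=%O /= /lexsum_le /= ltxx eqxx tagged_asE. Qed.

Lemma lexsum_lt_tag {g h} (a : D g) (b : D h) : g < h ->
  Tagged (fun g => D g) a < Tagged (fun g => D g) b :> lexsum.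
Proof.
move=> lt_gh; rewrite lt_neqAle [_ <= _]/<=%O /= /lexsum_le /= lt_gh andbT.
by apply/eqP=> /(congr1 tag) /= eq_gh; rewrite eq_gh ltxx in lt_gh.
Qed.

End LexicographicSum.

Local Open Scope ring_scope.

Lemma vleNge {d : Order.disp_t} {D : orderType d} (x y : option D) :
  ~ vle x y -> vle y x.
Proof. by case: x y => [a|] [b|] //= /negP; rewrite -ltNge => /ltW. Qed.

Section WellOrdered.
Context {dG : Order.disp_t} {Gam : orderType dG}.

Lemma is_min_uniq {P : Gam -> Prop} {m m'} : is_min P m -> is_min P m' -> m = m'.
Proof. by case=> Pm min_m [Pm' min_m']; apply: le_anti; rewrite min_m ?min_m'. Qed.

Lemma well_ordered_sub {P Q : Gam -> Prop} :
  well_ordered P -> (forall g, Q g -> P g) -> well_ordered Q.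
Proof. by move=> woP QP S SQ; apply: woP => g /SQ /QP. Qed.

Lemma well_ordered_union {P Q : Gam -> Prop} : well_ordered P -> well_ordered Q ->
  well_ordered (fun g => P g \/ Q g).
Proof.
move=> woP woQ S SPQ neS.
have [/woP|noP] := classic (exists g, S g /\ P g); last first.
  apply: woQ neS => g Sg; case: (SPQ g Sg) => // Pg.
  by case: noP; exists g.
case=> [g [] //|m1 [[Sm1 _] min1]].
have below_m1 g : S g -> (g < m1)%O \/ (m1 <= g)%O.
  by move=> _; rewrite leNgt; case: (g < m1)%O; [left|right].
have [/woQ|none] := classic (exists g, S g /\ (g < m1)%O); last first.
  exists m1; split=> // g Sg; case: (below_m1 g Sg) => // lt_g.
  by case: none; exists g.
case=> [g [Sg lt_g]|m2 [[Sm2 lt_m2] min2]].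
  case: (SPQ g Sg) => // Pg.
  by move: (min1 g (conj Sg Pg)); rewrite leNgt lt_g.
exists m2; split=> // g Sg; case: (below_m1 g Sg) => [lt_g|le_g].
  exact: min2.
exact: le_trans (ltW lt_m2) le_g.
Qed.

Definition least (P : Gam -> Prop) : option Gam :=
  match excluded_middle_informative (exists m, is_min P m) with
  | left ex_min => Some (proj1_sig (constructive_indefinite_description _ ex_min))
  | right _ => None
  end.

Lemma least_is_min {P : Gam -> Prop} {m} : is_min P m -> least P = Some m.
Proof.
move=> min_m; rewrite /least; case: excluded_middle_informative => [ex_min|[]].
  by case: constructive_indefinite_description => m' /= /is_min_uniq/(_ min_m)->.
by exists m.
Qed.

Lemma least_None {P : Gam -> Prop} : ~ (exists m, is_min P m) -> least P = None.
Proof. by rewrite /least; case: excluded_middle_informative. Qed.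

End WellOrdered.

Section HahnGroup.
Context {dG : Order.disp_t} {Gam : orderType dG} {B : Gam -> zmodType}.

Lemma supp_hzero : ~ exists m, is_min (supp (hzero B)) m.
Proof. by case=> m []. Qed.

Lemma supp_hadd (x y : hprod B) g : supp (hadd x y) g -> supp x g \/ supp y g.
Proof.
rewrite /supp /hadd; have [-> | /eqP] := eqVneq (x g) 0; last by left.
by rewrite add0r; right.
Qed.

Lemma supp_hopp (x : hprod B) : supp (hopp x) = supp x.
Proof.
apply: functional_extensionality => g; apply: propositional_extensionality.
rewrite /supp /hopp; split=> nz xg0; apply: nz.
  by rewrite xg0 oppr0.
by apply/eqP; rewrite -oppr_eq0 xg0.
Qed.

Lemma hahn_subgroup :
  subgroup_closed (hzero B) (@hadd _ _ B) (@hopp _ _ B) (@hahn_set _ _ B).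
Proof.
split; [|split].
- by move=> S S0 [g /S0].
- move=> x y wo_x wo_y; apply: well_ordered_sub (well_ordered_union wo_x wo_y) _.
  exact: supp_hadd.
- by move=> x; rewrite /hahn_set supp_hopp.
Qed.

Lemma hahn_set_min {x : hprod B} : hahn_set x ->
  x = hzero B \/ exists m, is_min (supp x) m.
Proof.
move=> wo_x; have [/(wo_x _ (fun _ => id))|empty] := classic (exists g, supp x g).
  by right.
left; apply: functional_extensionality_dep => g.
by apply: NNPP => nz; apply: empty; exists g.
Qed.

Lemma hahn_leE {R} {x y : hprod B} {d} :
  is_min (fun g => supp x g \/ supp y g) d -> hahn_le R x y <-> R d (x d) (y d).
Proof.
move=> min_d; split=> [[[x0 y0]|[d' [min_d' Rd']]]|Rd]; last by right; exists d.
  by case: min_d; rewrite x0 y0 => -[] /(_ erefl).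
by rewrite -(is_min_uniq min_d' min_d).
Qed.

End HahnGroup.

Definition valuation_for {A : zmodType} {d : Order.disp_t} {D : orderType d}
    (v : A -> option D) (R : A -> A -> Prop) : Prop :=
  [/\ forall a, v a = None <-> a = 0,
      forall a b, vle (v a) (v (a + b)) \/ vle (v b) (v (a + b)),
      forall a, v (- a) = v a &
      forall a b, R a b <-> vle (v b) (v a)].

Lemma valuational_family {dG : Order.disp_t} {Gam : orderType dG}
    {B : Gam -> zmodType} {R : forall g, B g -> B g -> Prop} :
  (forall g, valuational (R g)) ->
  exists (dD : Gam -> Order.disp_t) (D : forall g, orderType (dD g))
    (v : forall g, B g -> option (D g)), forall g, valuation_for (v g) (R g).
Proof.
move=> HR.
have pick g : {d : Order.disp_t & {D : orderType d &
                {v : B g -> option D | valuation_for v (R g)}}}.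
  have /constructive_indefinite_description [d] := HR g.
  case/constructive_indefinite_description=> D.
  case/constructive_indefinite_description=> v [v0 [vD [vN vR]]].
  by exists d, D, v; split=> *; [apply: v0|apply: vD|apply: vN|apply: vR].
exists (fun g => projT1 (pick g)), (fun g => projT1 (projT2 (pick g))).
by exists (fun g => proj1_sig (projT2 (projT2 (pick g)))) => g; case: pick => d [D []].
Qed.

Section HahnValuation.
Context {dG : Order.disp_t} {Gam : orderType dG} {B : Gam -> zmodType}
  {R : forall g, B g -> B g -> Prop} {dD : Gam -> Order.disp_t}
  {D : forall g, orderType (dD g)} {v : forall g, B g -> option (D g)}.
Hypothesis vR : forall g : Gam, valuation_for (v g) (R g).

Let v_None g a : v g a = None <-> a = 0. Proof. by case: (vR g). Qed.

Let v_Some {g} {a : B g} : a <> 0 -> exists t, v g a = Some t.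
Proof. by case E: (v g a) => [t|] nz; [exists t|case: nz; apply/v_None]. Qed.

Let v0 g : v g 0 = None. Proof. exact/v_None. Qed.

Definition hval (x : hprod B) : option (lexsum D) :=
  if least (supp x) is Some m then omap (Tagged (fun g => D g)) (v m (x m))
  else None.

Lemma hval_min {x m} : is_min (supp x) m ->
  exists t, hval x = Some (Tagged (fun g => D g) t) /\ v m (x m) = Some t.
Proof.
move=> min_m; have [t vt] := v_Some (proj1 min_m).
by exists t; rewrite /hval (least_is_min min_m) vt.
Qed.

Lemma hval0 : hval (hzero B) = None.
Proof. by rewrite /hval least_None //; apply: supp_hzero. Qed.

Lemma hval_opp x : hval (hopp x) = hval x.
Proof.
rewrite /hval supp_hopp; case: least => // m.
by rewrite /hopp; case: (vR m) => _ _ ->.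
Qed.

Lemma hval_le_component (x : hprod B) m (t : D m) : hahn_set x ->
  vle (v m (x m)) (Some t) -> vle (hval x) (Some (Tagged (fun g => D g) t)).
Proof.
move=> wo_x vle_xm; have nz_xm : x m <> 0 by move=> xm0; rewrite xm0 v0 in vle_xm.
case: (hahn_set_min wo_x) => [x0|[mx min_mx]]; first by rewrite x0 in nz_xm.
have [s [-> vs]] := hval_min min_mx; rewrite /=.
have := proj2 min_mx m nz_xm; rewrite le_eqVlt => /orP[/eqP eq_m|lt_m].
  by subst mx; rewrite lexsum_le_tagged; rewrite vs in vle_xm.
exact/ltW/lexsum_lt_tag.
Qed.

Lemma hval_gt (x : hprod B) d (t : D d) : hahn_set x -> x d = 0 ->
  (forall g, supp x g -> (d <= g)%O) ->
  ~ vle (hval x) (Some (Tagged (fun g => D g) t)).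
Proof.
move=> wo_x xd0 above_d; case: (hahn_set_min wo_x) => [->|[m min_m]].
  by rewrite hval0.
have [s [-> _]] := hval_min min_m; rewrite /= leNgt => /negP; apply.
apply: lexsum_lt_tag; rewrite lt_neqAle above_d ?andbT; last exact: proj1 min_m.
by apply/eqP=> eq_dm; subst m; case: min_m.
Qed.

Lemma hval_add x y : hahn_set x -> hahn_set y ->
  vle (hval x) (hval (hadd x y)) \/ vle (hval y) (hval (hadd x y)).
Proof.
move=> wo_x wo_y; have [_ [wo_add _]] := hahn_subgroup (B := B).
case: (hahn_set_min (wo_add _ _ wo_x wo_y)) => [->|[m min_m]].
  by rewrite hval0; left.
have [t [-> vt]] := hval_min min_m; rewrite /hadd in vt.
case: (vR m) => _ vD _ _; case: (vD (x m) (y m)); rewrite vt => vle_t.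
  by left; apply: hval_le_component.
by right; apply: hval_le_component.
Qed.

Lemma hval_le_iff x y : hahn_set x -> hahn_set y ->
  hahn_le R x y <-> vle (hval y) (hval x).
Proof.
move=> wo_x wo_y.
have [[-> ->]|nz] := classic (x = hzero B /\ y = hzero B).
  by rewrite hval0; split=> // _; left.
have [d min_d] : exists d, is_min (fun g => supp x g \/ supp y g) d.
  apply: (well_ordered_union wo_x wo_y _ (fun _ => id)).
  case: (hahn_set_min wo_x) => [x0|[m [xm _]]]; last by exists m; left.
  case: (hahn_set_min wo_y) => [y0|[m [ym _]]]; last by exists m; right.
  by case: nz.
have above_d g : supp x g \/ supp y g -> (d <= g)%O by apply: (proj2 min_d).
have min_at (z : hprod B) : (forall g, supp z g -> supp x g \/ supp y g) ->
    z d <> 0 -> is_min (supp z) d.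
  by move=> sub_z nz_zd; split=> // g /sub_z /above_d.
rewrite (hahn_leE min_d); case: (vR d) => _ _ _ ->.
have [xd0|/eqP nz_xd] := eqVneq (x d) 0; have [yd0|/eqP nz_yd] := eqVneq (y d) 0.
- by case: min_d => -[/(_ xd0)|/(_ yd0)].
- have [t [-> _]] := hval_min (min_at y (fun g yg => or_intror yg) nz_yd).
  rewrite xd0 v0; split=> // _; apply: vleNge; apply: hval_gt => //.
  by move=> g xg; apply: above_d; left.
- have [t [-> ->]] := hval_min (min_at x (fun g xg => or_introl xg) nz_xd).
  rewrite yd0 v0; split=> // vle_y; exfalso; move: vle_y; apply: hval_gt => //.
  by move=> g yg; apply: above_d; right.
- have [s [-> ->]] := hval_min (min_at x (fun g xg => or_introl xg) nz_xd).
  have [t [-> ->]] := hval_min (min_at y (fun g yg => or_intror yg) nz_yd).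
  by rewrite /= lexsum_le_tagged.
Qed.

Lemma hahn_valuational : valuational_on (hzero B) (@hadd _ _ B) (@hopp _ _ B)
  (@hahn_set _ _ B) (hahn_le R).
Proof.
exists dG, (lexsum D), hval; split; [|split; [|split]].
- move=> x wo_x; split=> [|->]; last exact: hval0.
  case: (hahn_set_min wo_x) => [//|[m /hval_min [t [-> _]]]] //.
- by move=> x y; apply: hval_add.
- by move=> x _; apply: hval_opp.
- by move=> x y; apply: hval_le_iff.
Qed.

End HahnValuation.

Theorem mainTheorem11 (dG : Order.disp_t) (Gam : orderType dG)
    (B : Gam -> zmodType) (R : forall g, B g -> B g -> Prop)
    (HR : forall g, valuational (R g)) :
  subgroup_closed (hzero B) (@hadd _ _ B) (@hopp _ _ B) (@hahn_set _ _ B) /\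
  valuational_on (hzero B) (@hadd _ _ B) (@hopp _ _ B) (@hahn_set _ _ B)
    (hahn_le R).
Proof.
split; first exact: hahn_subgroup.
have [dD [D [v vR]]] := valuational_family HR.
exact: hahn_valuational vR.
Qed.
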